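(* For every instance of Problem (P), the output $(x_1,\dots,x_n)$ of Algorithm 1 is an optimal solution of Problem (P).
   Context: Problem (P): given an integer $n\ge1$, reals $0<q_1\le\cdots\le q_n$, $z_1,\dots,z_n>0$ and $K>0$, maximize $\sum_{i=1}^n x_i$ subject to $0\le x_i\le q_i$ for all $i$, $0\le x_1\le x_2\le\cdots\le x_n$, and $\sum_{i=1}^n z_ix_i\le K$. For $1\le i<j\le n+1$ let $\mathrm{sum}(i,j)=z_i+\cdots+z_{j-1}$ and $\mathrm{avg}(i,j)=\mathrm{sum}(i,j)/(j-i)$. Algorithm 1: Initialize $S=\{0,n+1\}$, $y_i=\mathrm{avg}(i,n+1)$ and $x_i=0$ for $i=1,\dots,n$, and $\hat B=K$. While $\hat B>0$ and $S\ne\{0,1,\dots,n+1\}$, perform an iteration: let $i^*$ be the index $i\in\{1,\dots,n\}\setminus S$ minimizing $y_i$, ties broken in favour of the smallest index; let $i_L=\max\{j\in S:j<i^*\}$ and $i_R=\min\{j\in S:j>i^*\}$; set $d=\min\{\hat B/((i_R-i^* )y_{i^*}),\ q_{i^*}-x_{i^*}\}$; set $\hat B\leftarrow\hat B-d(i_R-i^* )y_{i^*}$; set $x_i\leftarrow x_i+d$ for all $i^*\le i<i_R$; set $y_i\leftarrow\mathrm{avg}(i,i^* )$ for all $i_L<i<i^*$; add $i^*$ to $S$. When the loop ends, output $x_1,\dots,x_n$. *)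

From HB Require Import structures.
From mathcomp Require Import all_boot all_order all_algebra.
From mathcomp Require Import reals.
Set Implicit Arguments. Unset Strict Implicit. Unset Printing Implicit Defensive.
Import Order.TTheory GRing.Theory Num.Theory.
Local Open Scope ring_scope.

Section Alg.
Variable R : realType.
Variables (n : nat) (q z : nat -> R) (K : R).

Definition zsum (i j : nat) : R := \sum_(i <= k < j) z k.
Definition avg (i j : nat) : R := zsum i j / (j - i)%:R.

Record state := State { stS : nat -> bool; sty : nat -> R; stx : nat -> R; stB : R }.

Definition init_state : state :=
  State (fun j => (j == 0)%N || (j == n.+1)%N) (fun i => avg i n.+1) (fun _ => 0) K.

Definition remaining (s : state) : seq nat := [seq i <- iota 1 n | ~~ stS s i].

(* argmin of y over a nonempty list, ties broken in favour of the earliest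
   (= smallest, since the list is increasing) index *)
Definition argmin_y (y : nat -> R) (l : seq nat) : nat :=
  foldl (fun best i => if y i < y best then i else best) (head 0%N l) (behead l).

Definition step (s : state) : state :=
  let S := stS s in let y := sty s in let x := stx s in let B := stB s in
  let istar := argmin_y y (remaining s) in
  let iL := last 0%N [seq j <- iota 0 istar | S j] in
  let iR := head n.+1 [seq j <- iota istar.+1 (n - istar) | S j] in
  let d := Num.min (B / ((iR - istar)%:R * y istar)) (q istar - x istar) in
  State (fun j => S j || (j == istar))
        (fun i => if (iL < i < istar)%N then avg i istar else y i)
        (fun i => if (istar <= i < iR)%N then x i + d else x i)
        (B - d * (iR - istar)%:R * y istar).

Definition loop_body (s : state) : state :=
  if (0 < stB s) && (remaining s != [::]) then step s else s.

(* Each real iteration adds a new index of {1..n} to S, so the loop performs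
   at most n iterations; after that loop_body is the identity. *)
Definition algorithm1_output : nat -> R := stx (iter n loop_body init_state).

End Alg.

Definition feasible (R : realType) (n : nat) (q z : nat -> R) (K : R) (x : nat -> R) : Prop :=
  (forall i, (1 <= i <= n)%N -> 0 <= x i <= q i) /\
  (0 <= x 1%N) /\
  (forall i, (1 <= i < n)%N -> x i <= x i.+1) /\
  (\sum_(1 <= i < n.+1) z i * x i <= K).

Definition optimal (R : realType) (n : nat) (q z : nat -> R) (K : R) (x : nat -> R) : Prop :=
  feasible n q z K x /\
  forall x', feasible n q z K x' -> \sum_(1 <= i < n.+1) x' i <= \sum_(1 <= i < n.+1) x i.

(* Algorithm 1 is a greedy water-filling run alongside a Lagrange multiplier l for
   the budget.  The selected set S cuts {1..n} into blocks [p, next p) on which x is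
   constant, and y_i is the average cost avg(i, next i) of the tail of the block
   containing i.  Raising the cheapest tail keeps every free index at average >= l
   and every selected one at average <= l, with equality unless x_p = q_p.  When the
   loop stops, either budget is left and x = q, or the budget is spent and these
   conditions make x maximise sum (l - z_i) x'_i over all nondecreasing x' <= q
   (Abel summation on each block), which with sum z x = K gives optimality. *)

From HB Require Import structures.
From mathcomp Require Import all_boot all_order all_algebra.
From mathcomp Require Import reals.
From mathcomp Require Import zify ring lra.
Import Order.TTheory GRing.Theory Num.Theory.
Local Open Scope ring_scope.
Set Implicit Arguments. Unset Strict Implicit. Unset Printing Implicit Defensive.

Definition is_next (S : pred nat) (N i b : nat) : Prop :=
  [/\ (i < b)%N, (b <= N)%N, S b & forall k, (i < k < b)%N -> ~~ S k].

Section NextInSet.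
Variable S : pred nat.

Lemma is_next_uniq N i b1 b2 : is_next S N i b1 -> is_next S N i b2 -> b1 = b2.
Proof.
case=> lt_ib1 _ Sb1 noS1 [lt_ib2 _ Sb2 noS2].
case: (ltngtP b1 b2) => // lt_b.
- by move: (noS2 b1); rewrite lt_ib1 lt_b Sb1 => /(_ isT).
- by move: (noS1 b2); rewrite lt_ib2 lt_b Sb2 => /(_ isT).
Qed.

Lemma head_filter_iota a m (h := head (a + m)%N [seq j <- iota a m | S j]) :
  [/\ (a <= h <= a + m)%N, S h \/ h = (a + m)%N & forall k, (a <= k < h)%N -> ~~ S k].
Proof.
rewrite {}/h; elim: m a => [|m IHm] a /=.
  by rewrite addn0 leqnn; split=> // [|k]; [right | lia].
case Sa: (S a) => /=; first by split; [lia | left | lia].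
have [le_h S_h noS] := IHm a.+1; rewrite -addSnnS.
split=> // [|k /andP[le_ak lt_kh]]; first lia.
have [lt_ka|lt_ak|->] := ltngtP k a; last by rewrite Sa.
- lia.
- by apply: noS; rewrite lt_ak.
Qed.

Lemma is_next_head N i : S N -> (i < N)%N ->
  is_next S N i (head N [seq j <- iota i.+1 (N - i.+1) | S j]).
Proof.
move=> SN lt_iN; have [le_h S_h noS] := head_filter_iota i.+1 (N - i.+1).
move: le_h S_h noS; rewrite (_ : (i.+1 + (N - i.+1))%N = N); last by lia.
set h := head _ _ => le_h S_h noS.
by split=> [|||k /andP[]]; [lia | lia | case: S_h => // -> | move=> *; apply: noS; lia].
Qed.

Lemma is_next_exists N i : S N -> (i < N)%N -> exists b, is_next S N i b.
Proof. by move=> SN lt_iN; eexists; apply: is_next_head. Qed.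

Lemma last_filter_iota m (h := last 0%N [seq j <- iota 0 m | S j]) : S 0%N -> (0 < m)%N ->
  [/\ (h < m)%N, S h & forall k, (h < k < m)%N -> ~~ S k].
Proof.
rewrite {}/h => S0; elim: m => [//|m IHm] _.
rewrite -[m.+1]addn1 iotaD add0n filter_cat last_cat /=.
case Sm: (S m) => /=; first by split=> // [|k]; lia.
case: m IHm Sm => [|m] IHm Sm; first by rewrite Sm in S0.
have [lt_h S_h noS] := IHm isT; split=> // [|k /andP[lt_hk lt_km]]; first lia.
have [lt_km'|lt_mk|->] := ltngtP k m.+1; last by rewrite Sm.
- by apply: noS; rewrite lt_hk.
- lia.
Qed.

Lemma is_next_setU1 N i b i0 : is_next S N i b -> ~~ (i < i0 < b)%N ->
  is_next (fun j => S j || (j == i0)) N i b.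
Proof.
case=> lt_ib le_bN Sb noS out_i0; split=> //=; first by rewrite Sb.
move=> k lt_k; rewrite negb_or noS //=; apply: contraNneq out_i0 => <-.
exact: lt_k.
Qed.

Lemma is_next_setU1_inv N i b i0 : is_next (fun j => S j || (j == i0)) N i b ->
  b != i0 -> is_next S N i b.
Proof.
case=> lt_ib le_bN /= /orP[Sb|/eqP->] noS; last by rewrite eqxx.
by split=> // k /noS; rewrite negb_or => /andP[].
Qed.

End NextInSet.

Lemma argmin_yP (R : realType) (y : nat -> R) (l : seq nat) : l != [::] ->
  argmin_y y l \in l /\ forall i, i \in l -> y (argmin_y y l) <= y i.
Proof.
case: l => [//|a l] _; rewrite /argmin_y /=.
set f := fun best i => if y i < y best then i else best.
suff min_fold b : [/\ foldl f b l \in b :: l, y (foldl f b l) <= y b &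
                     forall i, i \in l -> y (foldl f b l) <= y i].
  have [in_l le_a le_l] := min_fold a.
  by split=> // i; rewrite inE => /predU1P[->|]; last exact: le_l.
elim: l b => [|c l IHl] b /=; first by rewrite inE eqxx.
rewrite [f b c]/f; case: ifP => lt_cb.
  have [in_l le_c le_l] := IHl c; split.
  - by move: in_l; rewrite !inE => /orP[->|->]; rewrite ?orbT.
  - by apply: (le_trans le_c); apply: ltW.
  - by move=> i; rewrite inE => /predU1P[->|]; last exact: le_l.
have [in_l le_b le_l] := IHl b; split=> //.
- by move: in_l; rewrite !inE => /orP[->|->]; rewrite ?orbT.
- move=> i; rewrite inE => /predU1P[->|]; last exact: le_l.
  by apply: le_trans le_b _; rewrite leNgt lt_cb.
Qed.

Section Surplus.
Variables (R : realType) (z : nat -> R).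

Definition surplus (l : R) (a b : nat) : R := \sum_(a <= i < b) (l - z i).

Lemma surplus_cat l a c b : (a <= c <= b)%N ->
  surplus l a b = surplus l a c + surplus l c b.
Proof. by case/andP=> le_ac le_cb; rewrite /surplus (big_cat_nat le_ac le_cb). Qed.

Lemma surplusE l a b : surplus l a b = (b - a)%:R * l - zsum z a b.
Proof. by rewrite /surplus sumrB sumr_const_nat mulr_natl. Qed.

Section Compare.
Variables (l : R) (a b : nat).
Hypothesis lt_ab : (a < b)%N.

Let len_gt0 : 0 < (b - a)%:R :> R. Proof. by rewrite ltr0n subn_gt0. Qed.

Lemma le_avg_surplus : (l <= avg z a b) = (surplus l a b <= 0).
Proof. by rewrite surplusE /avg ler_pdivlMr // subr_le0 mulrC. Qed.

Lemma avg_le_surplus : (avg z a b <= l) = (0 <= surplus l a b).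
Proof. by rewrite surplusE /avg ler_pdivrMr // subr_ge0 mulrC. Qed.

Lemma avg_eq_surplus : (avg z a b == l) = (surplus l a b == 0).
Proof. by rewrite eq_le avg_le_surplus le_avg_surplus [RHS]eq_le andbC. Qed.

Lemma avg_gt0 : (forall i, (a <= i < b)%N -> 0 < z i) -> 0 < avg z a b.
Proof.
move=> z_gt0; rewrite /avg divr_gt0 // /zsum big_ltn //.
rewrite ltr_wpDr ?z_gt0 ?leqnn // big_nat_cond sumr_ge0 // => i.
by case/andP=> /andP[le_ai lt_ib] _; apply/ltW/z_gt0; lia.
Qed.

End Compare.
End Surplus.

Section BlockSums.
Variables (R : realType) (c x : nat -> R).

Lemma flat_const a b : (forall i, (a < i < b)%N -> x i = x i.-1) ->
  forall i, (a <= i < b)%N -> x i = x a.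
Proof.
move=> flat; elim=> [|i IHi] /andP[le_ai lt_ib]; first by rewrite (_ : a = 0%N) //; lia.
have [lt_ai|//|->//] := ltngtP a i.+1; last by lia.
by rewrite flat ?lt_ai //= IHi //; lia.
Qed.

Lemma flat_block_sum a b : (forall i, (a < i < b)%N -> x i = x i.-1) ->
  \sum_(a <= i < b) c i * x i = x a * \sum_(a <= i < b) c i.
Proof.
move=> flat; rewrite mulr_sumr big_nat_cond [RHS]big_nat_cond.
by apply: eq_bigr => i /andP[a_i_b _]; rewrite (flat_const flat a_i_b) mulrC.
Qed.

(* Abel summation: a nondecreasing [x] is the sum of nonnegative increments, each
   multiplying a tail sum of [c], and those tails are nonpositive. *)
Lemma monotone_block_sum_le a b : (a < b)%N ->
  (forall i, (a <= i)%N -> (i.+1 < b)%N -> x i <= x i.+1) ->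
  (forall i, (a < i < b)%N -> \sum_(i <= k < b) c k <= 0) ->
  \sum_(a <= i < b) c i * x i <= x a * \sum_(a <= i < b) c i.
Proof.
move=> lt_ab; have [m ->] : exists m, b = (a + m.+1)%N by exists (b - a.+1)%N; lia.
elim: m a {lt_ab} => [|m IHm] a mono tail_le0.
  by rewrite addn1 !big_nat1 mulrC.
have lt_a : (a < a + m.+2)%N by lia.
rewrite (big_ltn lt_a) [in X in _ <= X](big_ltn lt_a).
rewrite -addSnnS in mono tail_le0 *.
have tail_a1 : \sum_(a.+1 <= k < a.+1 + m.+1) c k <= 0 by apply: tail_le0; lia.
apply: le_trans (lerD (lexx _) (IHm a.+1 _ _)) _.
- by move=> i le_ai lt_ib; apply: mono; lia.
- by move=> i lt_i; apply: tail_le0; lia.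
rewrite mulrDr mulrC lerD2l; apply: ler_wnM2r => //; apply: mono; lia.
Qed.

End BlockSums.

Section WeakDuality.
Variables (R : realType) (n : nat) (q z : nat -> R) (S : pred nat) (l : R).
Variables (x x' : nat -> R).
Hypothesis S_top : S n.+1.
Hypothesis free_avg_ge : forall i b, (1 <= i <= n)%N -> ~~ S i ->
  is_next S n.+1 i b -> l <= avg z i b.
Hypothesis fixed_avg_le : forall p b, (1 <= p <= n)%N -> S p -> is_next S n.+1 p b ->
  avg z p b <= l /\ (x p = q p \/ avg z p b = l).
Hypothesis x0 : x 0%N = 0.
Hypothesis x_flat : forall i, (1 <= i <= n)%N -> ~~ S i -> x i = x i.-1.
Hypothesis x'_le_q : forall i, (1 <= i <= n)%N -> x' i <= q i.
Hypothesis x'1_ge0 : 0 <= x' 1%N.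
Hypothesis x'_mono : forall i, (1 <= i < n)%N -> x' i <= x' i.+1.

Lemma block_lagrangian_le j b : (1 <= j <= n)%N -> S j || (j == 1%N) ->
  is_next S n.+1 j b ->
  \sum_(j <= i < b) (l - z i) * x' i <= \sum_(j <= i < b) (l - z i) * x i.
Proof.
move=> j_in Sj_or_1 nxt_jb; case: (nxt_jb) => lt_jb le_b Sb noS.
rewrite [X in _ <= X]flat_block_sum; last first.
  by move=> i /andP[lt_ji lt_ib]; apply: x_flat; [lia | apply: noS; lia].
apply: (le_trans (monotone_block_sum_le lt_jb _ _)).
- by move=> i le_ji lt_ib; apply: x'_mono; lia.
- move=> i /andP[lt_ji lt_ib]; change (surplus z l i b <= 0).
  rewrite -le_avg_surplus //; apply: free_avg_ge; [lia | apply: noS; lia |].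
  by split=> // k /andP[lt_ik lt_kb]; apply: noS; rewrite lt_kb andbT; lia.
change (x' j * surplus z l j b <= x j * surplus z l j b).
case Sj: (S j) in Sj_or_1.
  have [avg_le [->|avg_eq]] := fixed_avg_le j_in Sj nxt_jb.
    by apply: ler_wpM2r; [rewrite -avg_le_surplus | apply: x'_le_q].
  have /eqP-> : surplus z l j b == 0 by rewrite -avg_eq_surplus ?avg_eq.
  by rewrite !mulr0.
move: Sj_or_1 => /= /eqP j1; subst j.
have surplus_le0 : surplus z l 1 b <= 0 by rewrite -le_avg_surplus // free_avg_ge ?Sj.
by rewrite x_flat ?Sj // x0 mul0r mulr_ge0_le0.
Qed.

Lemma suffix_lagrangian_le j : (1 <= j <= n.+1)%N -> S j || (j == 1%N) ->
  \sum_(j <= i < n.+1) (l - z i) * x' i <= \sum_(j <= i < n.+1) (l - z i) * x i.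
Proof.
have [k] : exists k, (n.+1 - j <= k)%N by exists (n.+1 - j)%N.
elim: k j => [|k IHk] j le_k j_in Sj_or_1.
  by rewrite (_ : j = n.+1) ?big_geq //; lia.
have [->|lt_jn] := eqVneq j n.+1; first by rewrite !big_geq.
have j_le_n : (1 <= j <= n)%N by lia.
have [b nxt_jb] : exists b, is_next S n.+1 j b by apply: is_next_exists; lia.
case: (nxt_jb) => lt_jb le_b Sb _.
rewrite !(@big_cat_nat _ _ _ b j n.+1) ?(ltnW lt_jb) //.
apply: lerD; first exact: block_lagrangian_le.
by apply: IHk; rewrite ?Sb //; lia.
Qed.

Lemma lagrangian_le :
  \sum_(1 <= i < n.+1) (l - z i) * x' i <= \sum_(1 <= i < n.+1) (l - z i) * x i.
Proof. by apply: suffix_lagrangian_le; rewrite ?orbT. Qed.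

End WeakDuality.

Section Optimality.
Variables (R : realType) (n : nat) (q z : nat -> R) (K : R) (x : nat -> R).
Hypothesis x_feasible : feasible n q z K x.

Lemma optimal_of_lagrangian (l : R) : 0 < l -> \sum_(1 <= i < n.+1) z i * x i = K ->
  (forall x', feasible n q z K x' ->
     \sum_(1 <= i < n.+1) (l - z i) * x' i <= \sum_(1 <= i < n.+1) (l - z i) * x i) ->
  optimal n q z K x.
Proof.
move=> l_gt0 budget_x lagr; split=> // x' x'_feasible.
have := lagr x' x'_feasible; case: x'_feasible => _ [_ [_ budget_x']].
have split_sum y : \sum_(1 <= i < n.+1) (l - z i) * y i =
    l * \sum_(1 <= i < n.+1) y i - \sum_(1 <= i < n.+1) z i * y i.
  by rewrite mulr_sumr -sumrB; apply: eq_bigr => i _; rewrite mulrBl.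
rewrite !split_sum budget_x => lagr_x; rewrite -(ler_pM2l l_gt0); lra.
Qed.

Lemma optimal_of_saturated : (forall i, (1 <= i <= n)%N -> x i = q i) ->
  optimal n q z K x.
Proof.
move=> x_eq_q; split=> // x' [x'_bounds _].
rewrite big_nat_cond [X in _ <= X]big_nat_cond; apply: ler_sum => i /andP[i_in _].
have i_in' : (1 <= i <= n)%N by rewrite -ltnS.
by rewrite x_eq_q //; case/andP: (x'_bounds i i_in').
Qed.

End Optimality.

Lemma sum_nat_restrict (R : realType) (F : nat -> R) m a b N :
  (m <= a)%N -> (b <= N)%N ->
  \sum_(m <= i < N) (if (a <= i < b)%N then F i else 0) = \sum_(a <= i < b) F i.
Proof.
move=> le_ma le_bN; rewrite -big_mkcond (big_nat_widenl _ _ _ _ _ le_ma).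
by rewrite (big_nat_widen _ _ _ _ _ le_bN); exact: eq_bigl.
Qed.

Lemma iter_stops (T : Type) (f : T -> T) (m : T -> nat) (stop : pred T) :
  (forall t, stop t -> f t = t) -> (forall t, ~~ stop t -> (m (f t) < m t)%N) ->
  forall k t, (m t <= k)%N -> stop (iter k f t).
Proof.
move=> f_stop f_dec; elim=> [|k IHk] t le_mk.
  by case st: (stop t) => //; have := f_dec t (negbT st); lia.
case st: (stop t); first by rewrite iter_fix ?f_stop.
by rewrite iterSr; apply: IHk; have := f_dec t (negbT st); lia.
Qed.

Section Algorithm.
Variables (R : realType) (n : nat) (q z : nat -> R) (K : R).
Hypothesis n_gt0 : (0 < n)%N.
Hypothesis q1_gt0 : 0 < q 1%N.
Hypothesis q_mono : forall i, (1 <= i < n)%N -> q i <= q i.+1.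
Hypothesis z_gt0 : forall i, (1 <= i <= n)%N -> 0 < z i.
Hypothesis K_ge0 : 0 <= K.

Lemma q_homo i j : (1 <= i)%N -> (i <= j <= n)%N -> q i <= q j.
Proof.
move=> i_gt0 /andP[le_ij le_jn].
have := @homo_leq_in _ [pred k | 1 <= k <= n]%N q (fun a b => a <= b).
apply=> //; first exact: le_trans.
- by move=> a b; rewrite !inE => ? ? k ?; rewrite inE; lia.
- by move=> k; rewrite !inE => ? ?; apply: q_mono; lia.
- by rewrite inE; lia.
- by rewrite inE; lia.
Qed.

Lemma q_gt0 i : (1 <= i <= n)%N -> 0 < q i.
Proof. by case/andP=> i_gt0 le_in; apply: lt_le_trans q1_gt0 (q_homo _ _); lia. Qed.

(* [l] is the Lagrange multiplier of the budget constraint: the value of [y] at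
   the index most recently added to [S]. *)
Definition multiplier (s : state R) (l : R) : Prop :=
  (forall i, (1 <= i <= n)%N -> ~~ stS s i -> l <= sty s i) /\
  (forall p b, (1 <= p <= n)%N -> stS s p -> is_next (stS s) n.+1 p b ->
     avg z p b <= l /\ (stx s p = q p \/ avg z p b = l)).

Record invariant (s : state R) : Prop := {
  inv_S0 : stS s 0%N;
  inv_Stop : stS s n.+1;
  inv_y : forall i b, (1 <= i <= n)%N -> ~~ stS s i -> is_next (stS s) n.+1 i b ->
    sty s i = avg z i b;
  inv_x0 : stx s 0%N = 0;
  inv_x_flat : forall i, (1 <= i <= n)%N -> ~~ stS s i -> stx s i = stx s i.-1;
  inv_x_bounds : forall i, (1 <= i <= n)%N -> 0 <= stx s i <= q i;
  inv_x_mono : forall i, (1 <= i < n)%N -> stx s i <= stx s i.+1;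
  inv_B_ge0 : 0 <= stB s;
  inv_budget : \sum_(1 <= i < n.+1) z i * stx s i + stB s = K;
  inv_saturated : 0 < stB s -> forall p, (1 <= p <= n)%N -> stS s p -> stx s p = q p;
  inv_multiplier : exists2 l, 0 < l & multiplier s l }.

Lemma mem_remaining (s : state R) i :
  (i \in remaining n s) = (1 <= i <= n)%N && ~~ stS s i.
Proof. by rewrite mem_filter mem_iota andbC; congr (_ && _); lia. Qed.

Lemma init_invariant : invariant (init_state n z K).
Proof.
set s0 := init_state n z K.
have free_s0 i : (1 <= i <= n)%N -> ~~ stS s0 i by move=> i_in /=; lia.
split=> //=.
- by move=> i b i_in _ [lt_ib _ /orP[/eqP b0|/eqP ->] _] //; lia.
- by move=> i i_in; rewrite lexx ltW ?q_gt0.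
- by rewrite big1 ?add0r // => i _; rewrite mulr0.
- by move=> _ p p_in /orP[] /eqP p_eq; exfalso; lia.
have rem_s0 : remaining n s0 != [::].
  have : 1%N \in remaining n s0 by rewrite mem_remaining free_s0 // leqnn n_gt0.
  by case: (remaining _ _).
have [] := argmin_yP (sty s0) rem_s0.
set i0 := argmin_y _ _; rewrite mem_remaining => /andP[i0_in _] i0_min.
exists (sty s0 i0); first by apply: avg_gt0 => [|i ?]; [lia | apply: z_gt0; lia].
split=> [i i_in i_free|p b p_in]; first by apply: i0_min; rewrite mem_remaining i_in.
by rewrite (negbTE (free_s0 p p_in)).
Qed.

Section Step.
Variables (s : state R) (i0 iL iR : nat).
Hypothesis s_inv : invariant s.
Hypothesis B_gt0 : 0 < stB s.
Hypothesis i0_in : (1 <= i0 <= n)%N.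
Hypothesis i0_free : ~~ stS s i0.
Hypothesis y_i0_min : forall i, (1 <= i <= n)%N -> ~~ stS s i -> sty s i0 <= sty s i.
Hypothesis lt_iL_i0 : (iL < i0)%N.
Hypothesis iL_fixed : stS s iL.
Hypothesis iL_prev : forall k, (iL < k < i0)%N -> ~~ stS s k.
Hypothesis iR_next : is_next (stS s) n.+1 i0 iR.

Let lt_i0_iR : (i0 < iR)%N. Proof. by case: iR_next. Qed.
Let le_iR_n1 : (iR <= n.+1)%N. Proof. by case: iR_next. Qed.
Let iR_fixed : stS s iR. Proof. by case: iR_next. Qed.
Let free_i0_iR k : (i0 < k < iR)%N -> ~~ stS s k.
Proof. by case: iR_next => _ _ _; apply. Qed.

Lemma y_i0_avg : sty s i0 = avg z i0 iR.
Proof. exact: (inv_y s_inv i0_in i0_free iR_next). Qed.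

Lemma y_i0_gt0 : 0 < sty s i0.
Proof. by rewrite y_i0_avg; apply: avg_gt0 => // i ?; apply: z_gt0; lia. Qed.

Let unit_cost_gt0 : 0 < (iR - i0)%:R * sty s i0.
Proof. by rewrite mulr_gt0 ?y_i0_gt0 // ltr0n subn_gt0. Qed.

Lemma zsum_i0_iR : zsum z i0 iR = (iR - i0)%:R * sty s i0.
Proof. by rewrite y_i0_avg /avg mulrC divfK // pnatr_eq0 subn_eq0 -ltnNge. Qed.

Lemma surplus_i0_iR : surplus z (sty s i0) i0 iR = 0.
Proof. by apply/eqP; rewrite -avg_eq_surplus // -y_i0_avg. Qed.

Definition raise : R := Num.min (stB s / ((iR - i0)%:R * sty s i0)) (q i0 - stx s i0).

Definition step_at : state R :=
  State (fun j => stS s j || (j == i0))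
        (fun i => if (iL < i < i0)%N then avg z i i0 else sty s i)
        (fun i => if (i0 <= i < iR)%N then stx s i + raise else stx s i)
        (stB s - raise * (iR - i0)%:R * sty s i0).

Lemma raise_ge0 : 0 <= raise.
Proof.
have /andP[_ x_le_q] := inv_x_bounds s_inv i0_in.
by rewrite le_min subr_ge0 x_le_q divr_ge0 ?(ltW B_gt0) ?(ltW unit_cost_gt0).
Qed.

Lemma raise_le_room : stx s i0 + raise <= q i0.
Proof. by rewrite -lerBrDl /raise ge_min lexx orbT. Qed.

Lemma raise_cost_le_budget : raise * (iR - i0)%:R * sty s i0 <= stB s.
Proof. by rewrite -mulrA -ler_pdivlMr // /raise ge_min lexx. Qed.

Lemma raise_saturates : 0 < stB step_at -> raise = q i0 - stx s i0.
Proof.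
rewrite /= /raise minEle; case: ifP => // _.
by rewrite -mulrA divfK ?subrr ?ltxx // gt_eqF.
Qed.

Lemma x_const_block i : (i0 <= i < iR)%N -> stx s i = stx s i0.
Proof.
apply: flat_const => k /andP[lt_i0k lt_kR]; apply: (inv_x_flat s_inv); first lia.
by apply: free_i0_iR; rewrite lt_i0k.
Qed.

Lemma fixed_outside_block p : stS s p -> ~~ (i0 <= p < iR)%N.
Proof.
move=> Sp; apply/negP => /andP[le_i0p lt_pR].
have [lt_i0p|//|eq_i0p] := ltngtP i0 p; last by move: i0_free; rewrite eq_i0p Sp.
- by move: (free_i0_iR (k:=p)); rewrite lt_i0p lt_pR Sp => /(_ isT).
- lia.
Qed.

Lemma is_next_across_i0 j : (j < i0)%N -> (forall k, (j < k < i0)%N -> ~~ stS s k) ->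
  is_next (stS s) n.+1 j iR.
Proof.
move=> lt_j_i0 free_j_i0; split=> //; first lia.
move=> k /andP[lt_jk lt_kR]; have [lt_k_i0|lt_i0k|->//] := ltngtP k i0.
- by apply: free_j_i0; rewrite lt_jk.
- by apply: free_i0_iR; rewrite lt_i0k.
Qed.

Lemma step_y i b : (1 <= i <= n)%N -> ~~ stS step_at i ->
  is_next (stS step_at) n.+1 i b -> sty step_at i = avg z i b.
Proof.
move=> i_in; rewrite /= negb_or => /andP[i_free _] nxt_ib.
case: ifP => [/andP[lt_iL_i lt_i_i0] | not_left].
  suff nxt_i_i0 : is_next (stS step_at) n.+1 i i0.
    by rewrite (is_next_uniq nxt_ib nxt_i_i0).
  split=> //=; [lia | by rewrite eqxx orbT |].
  move=> k /andP[lt_ik lt_k_i0]; rewrite negb_or iL_prev /=; last lia.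
  by rewrite neq_ltn lt_k_i0.
apply: (inv_y s_inv i_in i_free); apply: (is_next_setU1_inv nxt_ib).
apply: contraFneq not_left => b_i0; case: nxt_ib; rewrite b_i0 => lt_i_i0 _ _ free_i_i0.
have [lt_i_iL|lt_iL_i|i_iL] := ltngtP i iL; last by rewrite i_iL iL_fixed in i_free.
- by move: (free_i_i0 iL); rewrite lt_i_iL lt_iL_i0 /= iL_fixed => /(_ isT).
- by rewrite lt_i_i0.
Qed.

Lemma step_x0 : stx step_at 0%N = 0.
Proof. by rewrite /= leqNgt (_ : (0 < i0)%N) ?(inv_x0 s_inv) //; lia. Qed.

Lemma step_x_flat i : (1 <= i <= n)%N -> ~~ stS step_at i ->
  stx step_at i = stx step_at i.-1.
Proof.
move=> i_in; rewrite /= negb_or => /andP[i_free i_ne_i0].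
have i_ne_iR : i != iR by apply: contraNneq i_free => ->.
have -> : (i0 <= i.-1 < iR)%N = (i0 <= i < iR)%N by lia.
by rewrite (inv_x_flat s_inv i_in i_free).
Qed.

Lemma step_x_bounds i : (1 <= i <= n)%N -> 0 <= stx step_at i <= q i.
Proof.
move=> i_in /=; case: ifP => [i_block|_]; last exact: (inv_x_bounds s_inv).
have /andP[x_ge0 _] := inv_x_bounds s_inv i0_in.
rewrite (x_const_block i_block) addr_ge0 ?raise_ge0 //=.
by apply: le_trans raise_le_room (q_homo _ _); lia.
Qed.

Lemma step_x_mono i : (1 <= i < n)%N -> stx step_at i <= stx step_at i.+1.
Proof.
move=> i_in; have x_le := inv_x_mono s_inv i_in; rewrite /=.
case: ifP => i_block; case: ifP => i1_block.
- by rewrite lerD2r.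
- have iR_eq : iR = i.+1 by lia.
  have iR_in : (1 <= iR <= n)%N by lia.
  rewrite (x_const_block i_block) -iR_eq (inv_saturated s_inv B_gt0 iR_in iR_fixed).
  by apply: le_trans raise_le_room (q_homo _ _); lia.
- by apply: le_trans x_le _; rewrite lerDl raise_ge0.
- exact: x_le.
Qed.

Lemma step_B_ge0 : 0 <= stB step_at.
Proof. by rewrite /= subr_ge0 raise_cost_le_budget. Qed.

Lemma step_budget : \sum_(1 <= i < n.+1) z i * stx step_at i + stB step_at = K.
Proof.
rewrite -(inv_budget s_inv) /=.
have -> : \sum_(1 <= i < n.+1)
      z i * (if (i0 <= i < iR)%N then stx s i + raise else stx s i)
    = \sum_(1 <= i < n.+1) z i * stx s i +
      \sum_(1 <= i < n.+1) (if (i0 <= i < iR)%N then raise * z i else 0).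
  by rewrite -big_split; apply: eq_bigr => i _; case: ifP => _ /=; ring.
rewrite sum_nat_restrict //; last by lia.
rewrite -mulr_sumr -/(zsum z i0 iR) zsum_i0_iR; ring.
Qed.

Lemma step_saturated : 0 < stB step_at ->
  forall p, (1 <= p <= n)%N -> stS step_at p -> stx step_at p = q p.
Proof.
move=> B'_gt0 p p_in /= /orP[Sp|/eqP->].
  by rewrite (negbTE (fixed_outside_block Sp)) (inv_saturated s_inv).
by rewrite leqnn lt_i0_iR (raise_saturates B'_gt0); ring.
Qed.

Lemma surplus_to_i0 j : (j < i0)%N ->
  surplus z (sty s i0) j i0 = surplus z (sty s i0) j iR.
Proof.
move=> lt_j_i0; rewrite [RHS](@surplus_cat _ _ _ _ i0) ?surplus_i0_iR ?addr0 //; lia.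
Qed.

Lemma step_multiplier_free i : (1 <= i <= n)%N -> ~~ stS step_at i ->
  sty s i0 <= sty step_at i.
Proof.
move=> i_in; rewrite /= negb_or => /andP[i_free _].
case: ifP => [/andP[lt_iL_i lt_i_i0]|_]; last exact: y_i0_min.
have nxt_iR : is_next (stS s) n.+1 i iR.
  by apply: is_next_across_i0 => // k /andP[? ?]; apply: iL_prev; lia.
have := y_i0_min i_in i_free; rewrite (inv_y s_inv i_in i_free nxt_iR).
by rewrite !le_avg_surplus ?surplus_to_i0 //; lia.
Qed.

Lemma step_multiplier_fixed p b : (1 <= p <= n)%N -> stS step_at p ->
  is_next (stS step_at) n.+1 p b ->
  avg z p b <= sty s i0 /\ (stx step_at p = q p \/ avg z p b = sty s i0).
Proof.
move=> p_in /= /orP[Sp|/eqP p_i0] nxt_pb; last first.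
  have nxt_i0 : is_next (stS step_at) n.+1 i0 iR by apply: is_next_setU1; rewrite ?ltnn.
  rewrite p_i0 in nxt_pb *; rewrite (is_next_uniq nxt_pb nxt_i0) -y_i0_avg.
  by split; last right.
split; last by left; rewrite (negbTE (fixed_outside_block Sp)) (inv_saturated s_inv).
have [l _ [l_le_free l_ge_fixed]] := inv_multiplier s_inv.
have l_le_y_i0 := l_le_free i0 i0_in i0_free.
have [b_i0|b_ne_i0] := eqVneq b i0; last first.
  have [avg_le_l _] := l_ge_fixed p b p_in Sp (is_next_setU1_inv nxt_pb b_ne_i0).
  exact: le_trans avg_le_l l_le_y_i0.
case: nxt_pb; rewrite b_i0 => lt_p_i0 _ _ free_p_i0.
have nxt_iR : is_next (stS s) n.+1 p iR.
  by apply: is_next_across_i0 => // k /free_p_i0; rewrite negb_or => /andP[].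
have [avg_le_l _] := l_ge_fixed p iR p_in Sp nxt_iR.
move: (le_trans avg_le_l l_le_y_i0); rewrite !avg_le_surplus ?surplus_to_i0 //; lia.
Qed.

Lemma step_invariant : invariant step_at.
Proof.
split.
- by rewrite /= (inv_S0 s_inv).
- by rewrite /= (inv_Stop s_inv).
- exact: step_y.
- exact: step_x0.
- exact: step_x_flat.
- exact: step_x_bounds.
- exact: step_x_mono.
- exact: step_B_ge0.
- exact: step_budget.
- exact: step_saturated.
- exists (sty s i0); first exact: y_i0_gt0.
  by split; [exact: step_multiplier_free | exact: step_multiplier_fixed].
Qed.

End Step.

Lemma loop_body_invariant s : invariant s -> invariant (loop_body n q z s).
Proof.
move=> s_inv; rewrite /loop_body; case: ifP => // /andP[B_gt0 rem_s].
have [] := argmin_yP (sty s) rem_s.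
set i0 := argmin_y _ _; rewrite mem_remaining => /andP[i0_in i0_free] i0_min.
have [|lt_iL iL_fixed iL_prev] := last_filter_iota (inv_S0 s_inv) (m := i0); first lia.
have iR_next :
    is_next (stS s) n.+1 i0 (head n.+1 [seq j <- iota i0.+1 (n - i0) | stS s j]).
  by rewrite -subSS; apply: is_next_head; [exact: inv_Stop | lia].
change (invariant (step_at s i0 (last 0%N [seq j <- iota 0 i0 | stS s j])
                              (head n.+1 [seq j <- iota i0.+1 (n - i0) | stS s j]))).
apply: step_invariant iR_next => // i i_in i_free.
by apply: i0_min; rewrite mem_remaining i_in.
Qed.

Definition stopped (s : state R) := ~~ ((0 < stB s) && (remaining n s != [::])).

Lemma size_remaining_loop_body s : ~~ stopped s ->
  (size (remaining n (loop_body n q z s)) < size (remaining n s))%N.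
Proof.
rewrite /stopped negbK /loop_body => running; rewrite running.
have [i0_rem _] := argmin_yP (sty s) (proj2 (andP running)).
have -> : remaining n (step n q z s) =
    rem (argmin_y (sty s) (remaining n s)) (remaining n s).
  rewrite rem_filter ?filter_uniq ?iota_uniq // /remaining -filter_predI.
  by apply: eq_filter => i /=; rewrite negb_or andbC.
by rewrite size_rem // prednK // lt0n size_eq0 (proj2 (andP running)).
Qed.

Lemma iter_loop_invariant k : invariant (iter k (loop_body n q z) (init_state n z K)).
Proof. by elim: k => [|k IHk]; [exact: init_invariant | exact: loop_body_invariant]. Qed.

Lemma iter_loop_stopped : stopped (iter n (loop_body n q z) (init_state n z K)).
Proof.
apply: (iter_stops (m := fun s => size (remaining n s))) => [s|s|].
- by rewrite /stopped /loop_body => /negbTE->.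
- exact: size_remaining_loop_body.
- by rewrite size_filter (leq_trans (count_size _ _)) ?size_iota.
Qed.

Lemma invariant_feasible s : invariant s -> feasible n q z K (stx s).
Proof.
move=> s_inv; split; first exact: inv_x_bounds.
have one_in : (1 <= 1 <= n)%N by rewrite leqnn n_gt0.
split; first by case/andP: (inv_x_bounds s_inv one_in).
split; first exact: inv_x_mono.
by rewrite -(inv_budget s_inv) lerDl inv_B_ge0.
Qed.

Lemma algorithm1_optimal : optimal n q z K (algorithm1_output n q z K).
Proof.
rewrite /algorithm1_output; have := iter_loop_stopped; have := iter_loop_invariant n.
set s := iter n _ _ => s_inv s_stopped; have x_feasible := invariant_feasible s_inv.
have [B_gt0|B_le0] := ltrP 0 (stB s).
  move: s_stopped; rewrite /stopped B_gt0 negbK => /eqP rem_nil.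
  apply: optimal_of_saturated => // i i_in; apply: (inv_saturated s_inv B_gt0 i_in).
  by have := mem_remaining s i; rewrite rem_nil i_in => /esym/negbFE.
have B0 : stB s = 0 by apply/le_anti; rewrite B_le0 inv_B_ge0.
have [l l_gt0 [l_le_free l_ge_fixed]] := inv_multiplier s_inv.
apply: (optimal_of_lagrangian x_feasible l_gt0).
  by rewrite -(inv_budget s_inv) B0 addr0.
move=> x' [x'_bounds [x'1_ge0 [x'_mono _]]].
apply: lagrangian_le (inv_Stop s_inv) _ l_ge_fixed (inv_x0 s_inv) (inv_x_flat s_inv) _
  x'1_ge0 x'_mono.
- move=> i b i_in i_free nxt_ib; rewrite -(inv_y s_inv i_in i_free nxt_ib).
  exact: l_le_free.
- by move=> i /x'_bounds /andP[].
Qed.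

End Algorithm.

Unset Implicit Arguments.

Theorem theorem3 (R : realType) (n : nat) (q z : nat -> R) (K : R) :
  (1 <= n)%N ->
  0 < q 1%N ->
  (forall i, (1 <= i < n)%N -> q i <= q i.+1) ->
  (forall i, (1 <= i <= n)%N -> 0 < z i) ->
  0 < K ->
  optimal n q z K (algorithm1_output n q z K).
Proof.
move=> n_gt0 q1_gt0 q_mono z_gt0 K_gt0.
exact: algorithm1_optimal n_gt0 q1_gt0 q_mono z_gt0 (ltW K_gt0).
Qed.
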